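(* Fix a partition $\Pi$ of $V(G)$ into sets of sizes divisible by $r$. Suppose each $f_v$ is $K_v$-Lipschitz and let $K_{\max}=\max_vK_v$. If $\mathcal P$ is sampled uniformly from the set of partitions of $V(G)$ into $n$ sets of size $r$ each contained in a single part of $\Pi$, and $T=T_{\vec B,\mathcal P}$ with $\vec B$ independent of $\mathcal P$, then $$\mathbb E_{\mathcal P}\Big[\big(\mathbb E_{\vec B}(\xi\mid\mathcal P)\big)^2\Big]\le\frac{2K_{\max}^2|\Pi|}{nr\,d_{\min}}.$$
   Context: Let $n,p,q$ be positive integers, $r=p+q$, $G$ a finite simple graph with $|V(G)|=rn$ and no isolated vertices; $\mathcal N(v)$, $d(v)$, $d_{\min}$ neighbor set, degree, minimum degree. For each $v$, $f_v:2^{\mathcal N(v)}\to\mathbb R$ with $f_v(\emptyset)=0$. $\sigma_T(v)=q$ if $v\in T$, $-p$ otherwise; for $|T|=pn$, $\xi=\frac1{pqn}\sum_v\sigma_T(v)f_v(T\cap\mathcal N(v))$. $f_v$ is $K_v$-Lipschitz ($K_v>0$) if $|f_v(A)-f_v(A')|\le K_v|A\triangle A'|/d(v)$ for all $A,A'\subseteq\mathcal N(v)$. Restricted randomization: for $\mathcal P=(S_1,\dots,S_n)$, $S_i=\{w_i^1,\dots,w_i^r\}$, $B_i$ i.i.d. uniform $p$-subsets of $\{1,\dots,r\}$, $T_{\vec B,\mathcal P}=\{w_i^j:j\in B_i\}$. *)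

From HB Require Import structures.
From mathcomp Require Import all_boot all_order all_algebra.
Set Implicit Arguments. Unset Strict Implicit. Unset Printing Implicit Defensive.
Import Order.TTheory GRing.Theory Num.Theory.
Local Open Scope ring_scope.

Section Defs.
Variable V : finType.

Definition simple_graph (e : rel V) : Prop :=
  (forall u v, e u v = e v u) /\ (forall v, ~~ e v v).

Definition nbhd (e : rel V) (v : V) : {set V} := [set u | e v u].
Definition deg (e : rel V) (v : V) : nat := #|nbhd e v|.
Definition dmin (e : rel V) : nat := \big[minn/#|V|]_(v : V) deg e v.

Variable R : realFieldType.

Definition Kmax (K : V -> R) : R := \big[Num.max/0]_(v : V) K v.

Definition symdiff (A B : {set V}) : {set V} := (A :\: B) :|: (B :\: A).

Definition lipschitz (e : rel V) (f : V -> {set V} -> R) (K : V -> R) : Prop :=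
  forall v (A A' : {set V}), A \subset nbhd e v -> A' \subset nbhd e v ->
    `|f v A - f v A'| <= K v * (#|symdiff A A'|)%:R / (deg e v)%:R.

Definition sigmaT (p q : nat) (T : {set V}) (v : V) : R :=
  if v \in T then q%:R else - p%:R.

Definition xi (p q n : nat) (e : rel V) (f : V -> {set V} -> R) (T : {set V}) : R :=
  (p * q * n)%:R^-1 * \sum_(v : V) sigmaT p q T v * f v (T :&: nbhd e v).

(* A partition P = (S_1,...,S_n), S_i = {w_i^1,...,w_i^r}, is encoded by the
   labelling w : 'I_n * 'I_r -> V, (i,j) |-> w_i^j (injective, hence a bijection
   since |V| = rn), such that each S_i lies in one part of Pi. *)
Definition valid_labelling (n r : nat) (Pi : {set {set V}})
    (w : {ffun 'I_n * 'I_r -> V}) : bool :=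
  injectiveb w && [forall i : 'I_n, exists B in Pi, forall j : 'I_r, w (i, j) \in B].

Definition valid_B (n r p : nat) (B : {ffun 'I_n -> {set 'I_r}}) : bool :=
  [forall i, #|B i| == p].

Definition T_of (n r : nat) (w : {ffun 'I_n * 'I_r -> V})
    (B : {ffun 'I_n -> {set 'I_r}}) : {set V} :=
  [set x | [exists i : 'I_n, exists j : 'I_r, (j \in B i) && (w (i, j) == x)]].

(* E_B(xi | P): B uniform over the product of uniform p-subsets *)
Definition condExp (p q n : nat) (e : rel V) (f : V -> {set V} -> R)
    (w : {ffun 'I_n * 'I_(p + q) -> V}) : R :=
  (\sum_(B : {ffun 'I_n -> {set 'I_(p + q)}} | @valid_B n (p + q) p B)
      @xi p q n e f (T_of w B))
  / (#|[pred B : {ffun 'I_n -> {set 'I_(p + q)}} | @valid_B n (p + q) p B]|)%:R.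

(* E_P[(E_B(xi|P))^2], P uniform among valid partitions *)
Definition meanSq (p q n : nat) (e : rel V) (f : V -> {set V} -> R)
    (Pi : {set {set V}}) : R :=
  (\sum_(w : {ffun 'I_n * 'I_(p + q) -> V} | @valid_labelling n (p + q) Pi w)
      (@condExp p q n e f w) ^+ 2)
  / (#|[pred w : {ffun 'I_n * 'I_(p + q) -> V} | @valid_labelling n (p + q) Pi w]|)%:R.

End Defs.

From HB Require Import structures.
From mathcomp Require Import all_boot all_order all_algebra all_fingroup ring zify.
Import Order.TTheory GRing.Theory Num.Theory.
Local Open Scope ring_scope.
Set Implicit Arguments. Unset Strict Implicit. Unset Printing Implicit Defensive.

(* Fix the partition P = (S_1, ..., S_n) and a vertex v = w_i^a.  Exchanging a with each
   b outside B_i pairs the families counted with weight q in sum_B sigma_B(v) f_v(..)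
   with those counted with weight -p, so this sum becomes a sum of differences
   f_v(X) - f_v(X') where X and X' differ at most in w_i^b; by the Lipschitz condition
   such a difference is at most K_v / d(v), and it vanishes unless w_i^b is a neighbour
   of v.  Counting families gives |E_B(xi | P)| <= K_max / (n r (r-1)) * Y(P) with
   Y(P) = sum_v |N(v) :&: S(v)| / d(v), and Y(P) <= r n (r-1) / d_min turns this into
   E_B(xi | P)^2 <= K_max^2 / (n r (r-1) d_min) * Y(P).  Finally, P is invariant under
   transpositions inside a part of Pi, so a vertex u <> v of the part Pi(v) shares the
   cell of v with probability (r-1) / (|Pi(v)| - 1); hence
   E_P[Y] <= (r-1) sum_v 1 / (|Pi(v)| - 1) <= 2 (r-1) |Pi|, as every part has >= 2 elements. *)

Lemma exchange_big_card (R : nmodType) (I J : finType) (P : J -> pred I) (F : I -> R) :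
  \sum_j \sum_(x | P j x) F x = \sum_x F x *+ #|[pred j | P j x]|.
Proof.
under eq_bigr do rewrite big_mkcond.
by rewrite exchange_big; apply: eq_bigr => x _; rewrite -big_mkcond sumr_const.
Qed.

Lemma sum_nat_bool (T : finType) (P : pred T) : (\sum_x P x)%N = #|P|.
Proof.
by rewrite -sum1_card [RHS]big_mkcond; apply: eq_bigr => x _; rewrite unfold_in; case: (P x).
Qed.

Lemma perm_pair_exists (T : finType) (a b a' b' : T) :
  a != b -> a' != b' -> exists s : {perm T}, s a = a' /\ s b = b'.
Proof.
move=> ab a'b'; set t := tperm a a'.
have tb_a' : t b != a' by rewrite -[a'](tpermL a a') (inj_eq perm_inj) eq_sym.
exists (t * tperm (t b) b')%g; rewrite !permM tpermL tpermL; split=> //.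
by rewrite tpermD // eq_sym.
Qed.

Section PermuteBlock.
Variables (n r : nat).
Implicit Types (B : {ffun 'I_n -> {set 'I_r}}) (i : 'I_n) (s : {perm 'I_r}).

Definition permute_block i s B : {ffun 'I_n -> {set 'I_r}} :=
  [ffun k => if k == i then s @^-1: B k else B k].

Lemma permute_blockK i s : cancel (permute_block i s) (permute_block i s^-1).
Proof.
move=> B; apply/ffunP => k; rewrite !ffunE; case: eqP => // ->.
by apply/setP => x; rewrite !inE permKV.
Qed.

Lemma permute_block_inj i s : injective (permute_block i s).
Proof. exact: can_inj (permute_blockK i s). Qed.

End PermuteBlock.

Section PSubsetFamilies.
Variables (n p q : nat).
Local Notation r := (p + q)%N.
Local Notation family := {ffun 'I_n -> {set 'I_r}}.
Implicit Types (B : family) (i : 'I_n) (a b : 'I_r) (s : {perm 'I_r}).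

Lemma valid_permute_block i s B : valid_B p (permute_block i s B) = valid_B p B.
Proof.
apply: eq_forallb => k; rewrite ffunE; case: ifP => // _.
by rewrite card_preimset //; apply: perm_inj.
Qed.

Definition valid_in_out i a b B := [&& valid_B p B, a \in B i & b \notin B i].

Lemma valid_in_out_permute i s a b B :
  valid_in_out i a b (permute_block i s B) = valid_in_out i (s a) (s b) B.
Proof. by rewrite /valid_in_out valid_permute_block ffunE eqxx !inE. Qed.

Lemma card_compl_block B k : valid_B p B -> #|~: B k| = q.
Proof.
move/forallP/(_ k)/eqP => Bk.
by apply/eqP; rewrite -(eqn_add2l p) -{1}Bk cardsC card_ord.
Qed.

Lemma card_valid_in_out_fst i a B :
  #|[pred b | valid_in_out i a b B]| = ((valid_B p B && (a \in B i)) * q)%N.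
Proof.
rewrite /valid_in_out; case: (valid_B p B && (a \in B i)) / andP => [[vB ->]|nvB].
  by rewrite vB mul1n -[RHS](card_compl_block i vB); apply: eq_card => b; rewrite !inE.
by rewrite mul0n; apply: eq_card0 => b; rewrite !inE andbA; apply/negP => /andP[/andP].
Qed.

Lemma card_valid_in_out_snd i b B :
  #|[pred a | valid_in_out i a b B]| = ((valid_B p B && (b \notin B i)) * p)%N.
Proof.
rewrite /valid_in_out; case: (valid_B p B && (b \notin B i)) / andP => [[vB ->]|nvB].
  rewrite vB mul1n -[RHS](eqP (forallP vB i)).
  by apply: eq_card => a; rewrite !inE andbT.
rewrite mul0n; apply: eq_card0 => a; rewrite !inE.
by apply/negP => /and3P[vB _ bB]; apply: nvB.
Qed.

(* Exchanging a and b in block i maps the families with a in B i, b notin B i bijectively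
   onto those with b in B i, a notin B i.  Summed over b, a family with a in B i is thus
   counted q times with sign +, and a family with a notin B i p times with sign -. *)
Lemma sum_sign_swap (R : pzRingType) i a (F : family -> R) :
  \sum_(B | valid_B p B) (if a \in B i then q%:R else - p%:R) * F B =
  \sum_b \sum_(B | valid_in_out i a b B) (F B - F (permute_block i (tperm a b) B)).
Proof.
have swap b : \sum_(B | valid_in_out i a b B) F (permute_block i (tperm a b) B)
              = \sum_(B | valid_in_out i b a B) F B.
  rewrite [RHS](reindex_inj (@permute_block_inj _ _ i (tperm a b))); apply: eq_bigl => B.
  by rewrite valid_in_out_permute tpermL tpermR.
under [RHS]eq_bigr => b _ do rewrite sumrB swap.
rewrite sumrB !exchange_big_card -sumrB big_mkcond; apply: eq_bigr => B _.
rewrite card_valid_in_out_fst card_valid_in_out_snd.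
case: (valid_B p B); case: (a \in B i);
  by rewrite /= ?mul0n ?mul1n ?mulr0 ?mulr0n ?subr0 ?sub0r ?mulNr ?mulr_natl.
Qed.

Definition in_out_count i a b := #|[set B | valid_in_out i a b B]|.

Lemma in_out_count_perm i s a b : in_out_count i (s a) (s b) = in_out_count i a b.
Proof.
rewrite /in_out_count -[RHS](card_preimset _ (@permute_block_inj _ _ i s)).
by apply: eq_card => B; rewrite !inE valid_in_out_permute.
Qed.

Lemma in_out_count_const i a b a' b' :
  a != b -> a' != b' -> in_out_count i a b = in_out_count i a' b'.
Proof.
move=> ab a'b'; have [s [<- <-]] := perm_pair_exists ab a'b'.
by rewrite in_out_count_perm.
Qed.

Lemma in_out_count_diag i a : in_out_count i a a = 0%N.
Proof.
by apply: eq_card0 => B; rewrite !inE /valid_in_out; case: (a \in B i); rewrite ?andbF.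
Qed.

Lemma in_out_count_sum i :
  (\sum_a \sum_b in_out_count i a b = p * q * #|[pred B : family | valid_B p B]|)%N.
Proof.
under eq_bigr => a _.
  under eq_bigr => b _ do rewrite /in_out_count -sum1dep_card.
  rewrite exchange_big_card.
  under eq_bigr => B _ do rewrite card_valid_in_out_fst natn.
  over.
rewrite exchange_big [RHS]mulnC -sum_nat_bool big_distrl /=; apply: eq_bigr => B _.
rewrite -big_distrl /=; case: (valid_B p B) / idP => [vB|_]; last by rewrite big1.
by rewrite sum_nat_bool (eqP (forallP vB i)) mul1n mulnC.
Qed.

Lemma in_out_count_val i a b : a != b ->
  (in_out_count i a b * (r * r.-1) = p * q * #|[pred B : family | valid_B p B]|)%N.
Proof.
move=> ab; rewrite -(in_out_count_sum i).
under [RHS]eq_bigr => a' _.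
  rewrite (bigD1 a') //= in_out_count_diag add0n.
  rewrite (eq_bigr (fun=> in_out_count i a b)) => [|b' b'a']; last first.
    by apply: in_out_count_const; rewrite // eq_sym.
  rewrite sum_nat_const cardC1 card_ord.
  over.
by rewrite sum_nat_const card_ord [LHS]mulnC -mulnA.
Qed.

Lemma in_out_count_ratio (R : numFieldType) i a b : a != b ->
  (in_out_count i a b)%:R =
    (p * q)%:R / (r * r.-1)%:R * #|[pred B : family | valid_B p B]|%:R :> R.
Proof.
move=> ab; have r_gt1 : (1 < r)%N.
  have := ltn_ord a; have := ltn_ord b.
  by have : nat_of_ord a != b by []; rewrite neq_ltn => /orP[]; lia.
rewrite mulrAC -natrM -(in_out_count_val i ab) natrM mulfK // pnatr_eq0; lia.
Qed.

End PSubsetFamilies.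

Arguments in_out_count {n} p q i a b.

Lemma cards_set1I (T : finType) (x : T) (A : {set T}) : #|[set x] :&: A| = (x \in A).
Proof.
case: (boolP (x \in A)) => xA.
  by rewrite (setIidPl _) ?cards1 // sub1set.
rewrite (_ : _ :&: _ = set0) ?cards0 //; apply/setP => y; rewrite !inE.
by apply/andP => -[/eqP -> ]; apply/negP.
Qed.

Lemma symdiff_setIr (T : finType) (A B C : {set T}) :
  symdiff (A :&: C) (B :&: C) = symdiff A B :&: C.
Proof.
by apply/setP => x; rewrite !inE; case: (x \in A); case: (x \in B); case: (x \in C).
Qed.

Section Cells.
Variables (V : finType) (n r : nat).
Local Notation labelling := {ffun 'I_n * 'I_r -> V}.
Implicit Types (w : labelling) (v u : V).

Definition same_cell w v u : bool :=
  [exists i, [exists j, w (i, j) == v] && [exists j, w (i, j) == u]].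

Definition cell w v : {set V} := [set u | same_cell w v u].

Definition cell_deg (e : rel V) w v : nat := #|nbhd e v :&: cell w v|.

Definition cell_adjacency (R : numFieldType) (e : rel V) w : R :=
  \sum_v (cell_deg e w v)%:R / (deg e v)%:R.

Variable w : labelling.
Hypothesis w_inj : injective w.
Hypothesis cardV : #|V| = (r * n)%N.

Lemma labelling_bij : bijective w.
Proof. by apply: inj_card_bij => //; rewrite card_prod !card_ord cardV mulnC. Qed.

Lemma cell_label i j : cell w (w (i, j)) = [set w (i, k) | k : 'I_r].
Proof.
apply/setP => u; rewrite inE /same_cell; apply/existsP/imsetP => [[i'] | [k _ ->]].
  by case/andP => /existsP[j' /eqP/w_inj[-> _]] /existsP[k /eqP <-]; exists k.
by exists i; apply/andP; split; apply/existsP; [exists j | exists k].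
Qed.

Lemma card_cell v : #|cell w v| = r.
Proof.
have [g _ gK] := labelling_bij; case: (g v) (gK v) => i j <-.
by rewrite cell_label card_imset ?card_ord // => k k' /w_inj[].
Qed.

Lemma cell_self v : v \in cell w v.
Proof.
have [g _ gK] := labelling_bij; case: (g v) (gK v) => i j <-.
by rewrite cell_label; apply: imset_f.
Qed.

Lemma card_cellD1 v : #|cell w v :\ v| = r.-1.
Proof. by have := cardsD1 v (cell w v); rewrite cell_self card_cell add1n => ->. Qed.

Lemma cell_deg_le (e : rel V) v : ~~ e v v -> (cell_deg e w v <= r.-1)%N.
Proof.
move=> evv; rewrite -(card_cellD1 v); apply: subset_leq_card; apply/subsetP => u.
rewrite in_setI in_setD1 /nbhd inE => /andP[evu ->].
by rewrite andbT; apply: contraNneq evv => uv; rewrite uv in evu.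
Qed.

Lemma mem_T_of B k l : (w (k, l) \in T_of w B) = (l \in B k).
Proof.
rewrite inE; apply/existsP/idP => [[k' /existsP[l' /andP[lB /eqP/w_inj[<- <-]]]] //|lB].
by exists k; apply/existsP; exists l; rewrite lB eqxx.
Qed.

Lemma sum_labelling (R : nmodType) (F : V -> R) : \sum_v F v = \sum_x F (w x).
Proof. by rewrite (reindex w) //; apply: onW_bij; apply: labelling_bij. Qed.

Lemma cell_deg_label (e : rel V) i j :
  cell_deg e w (w (i, j)) = #|[pred k | e (w (i, j)) (w (i, k))]|.
Proof.
have row_inj : injective (fun k => w (i, k)) by move=> k k' /w_inj[].
rewrite /cell_deg cell_label -(card_imset _ row_inj); apply: eq_card => u.
rewrite !inE; apply/andP/imsetP => [[evu /imsetP[k _ uk]]|[k ek ->]].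
  by exists k; rewrite // inE -uk.
by split; [exact: ek | apply: imset_f].
Qed.

Lemma symdiff_T_of_permute B i a b :
  symdiff (T_of w B) (T_of w (permute_block i (tperm a b) B))
    \subset [set w (i, a); w (i, b)].
Proof.
apply/subsetP => x; have [g _ gK] := labelling_bij; case: (g x) (gK x) => k l <-.
rewrite /symdiff in_setU !in_setD !mem_T_of in_set2 ffunE !(inj_eq w_inj) !xpair_eqE.
case: (eqVneq k i) => [->|_] /=; last by rewrite !andNb.
by rewrite inE; case: tpermP => [->|->|_ _]; rewrite ?eqxx ?orbT // !andNb.
Qed.

Lemma card_symdiff_nbhd (e : rel V) B i a b : ~~ e (w (i, a)) (w (i, a)) ->
  (#|symdiff (T_of w B :&: nbhd e (w (i, a)))
            (T_of w (permute_block i (tperm a b) B) :&: nbhd e (w (i, a)))|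
    <= e (w (i, a)) (w (i, b)))%N.
Proof.
move=> irr_a; rewrite symdiff_setIr.
apply: leq_trans (subset_leq_card (setSI _ (symdiff_T_of_permute B i a b))) _.
rewrite setIUl cardsU; apply: leq_trans (leq_subr _ _) _.
by rewrite !cards_set1I /nbhd !inE (negbTE irr_a).
Qed.

End Cells.

Lemma Kmax_ge (V : finType) (R : realFieldType) (K : V -> R) v : K v <= Kmax K.
Proof. by rewrite /Kmax (bigD1 v) //= le_max lexx. Qed.

Lemma Kmax_ge0 (V : finType) (R : realFieldType) (K : V -> R) : 0 <= Kmax K.
Proof.
by rewrite /Kmax; elim/big_rec: _ => // v x _ x_ge0; rewrite le_max x_ge0 orbT.
Qed.

Lemma dmin_le_deg (V : finType) (e : rel V) v : (dmin e <= deg e v)%N.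
Proof.
rewrite /dmin; have : v \in index_enum V by rewrite mem_index_enum.
elim: (index_enum V) => //= u s IH; rewrite inE big_cons => /orP[/eqP <-|/IH].
  exact: geq_minl.
exact/leq_trans/geq_minr.
Qed.

Lemma dmin_gt0 (V : finType) (e : rel V) :
  (0 < #|V|)%N -> (forall v, 0 < deg e v)%N -> (0 < dmin e)%N.
Proof.
move=> V_gt0 deg_gt0; apply: (big_ind (fun m => 0 < m)%N) => // x y.
by rewrite leq_min => ->.
Qed.

Section SignedSum.
Variables (V : finType) (R : realFieldType) (n p q : nat) (e : rel V)
  (f : V -> {set V} -> R) (K : V -> R).
Local Notation r := (p + q)%N.
Local Notation family := {ffun 'I_n -> {set 'I_r}}.
Variable w : {ffun 'I_n * 'I_r -> V}.
Hypothesis w_inj : injective w.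
Hypothesis cardV : #|V| = (r * n)%N.
Hypothesis e_irr : forall v, ~~ e v v.
Hypothesis f_lip : lipschitz e f K.
Hypothesis K_ge0 : forall v, 0 <= K v.

Let NB : R := #|[pred B : family | valid_B p B]|%:R.

Lemma norm_sum_sign_le i a :
  `|\sum_(B : family | valid_B p B)
      sigmaT R p q (T_of w B) (w (i, a)) * f (w (i, a)) (T_of w B :&: nbhd e (w (i, a)))|
    <= (p * q)%:R / (r * r.-1)%:R * NB
       * (K (w (i, a)) / (deg e (w (i, a)))%:R * (cell_deg e w (w (i, a)))%:R).
Proof.
rewrite (cell_deg_label w_inj); set v := w (i, a).
set g := fun B => f v (T_of w B :&: nbhd e v); set Kd := K v / (deg e v)%:R.
rewrite (eq_bigr (fun B : family => (if a \in B i then q%:R else - p%:R) * g B))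
  => [|B _]; last by rewrite /sigmaT mem_T_of.
rewrite sum_sign_swap; apply: le_trans (ler_norm_sum _ _ _) _.
apply: (@le_trans _ _ (\sum_b (in_out_count p q i a b)%:R * (Kd * (e v (w (i, b)))%:R))).
  apply: ler_sum => b _; apply: le_trans (ler_norm_sum _ _ _) _.
  rewrite /in_out_count -sum1dep_card natr_sum mulr_suml; apply: ler_sum => B _.
  rewrite mul1r; apply: le_trans (f_lip (subsetIr _ _) (subsetIr _ _)) _.
  by rewrite mulrAC ler_wpM2l ?ler_nat ?card_symdiff_nbhd ?divr_ge0.
rewrite -sum_nat_bool natr_sum !mulr_sumr; apply: ler_sum => b _.
rewrite [X in _ <= X]/=; case evb: (e v (w (i, b))); last by rewrite !mulr0.
rewrite in_out_count_ratio ?mulr1 //; apply: contraNneq (e_irr v) => ab.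
by move: evb; rewrite /v ab.
Qed.

Hypotheses (n_gt0 : (0 < n)%N) (p_gt0 : (0 < p)%N) (q_gt0 : (0 < q)%N).

Lemma cell_adjacency_ge0 : 0 <= cell_adjacency R e w.
Proof. by apply: sumr_ge0 => v _; rewrite divr_ge0. Qed.

Lemma norm_condExp_le :
  `|condExp e f w| <= Kmax K / (n * r * r.-1)%:R * cell_adjacency R e w.
Proof.
rewrite /condExp -/NB.
have NB_ge0 : 0 <= NB by [].
have [->|NB_neq0] := eqVneq NB 0.
  by rewrite invr0 mulr0 normr0 mulr_ge0 ?divr_ge0 ?Kmax_ge0 ?cell_adjacency_ge0.
rewrite normrM normfV (ger0_norm NB_ge0) ler_pdivrMr ?lt_def ?NB_neq0 //.
have -> : \sum_(B : family | valid_B p B) xi p q n e f (T_of w B) =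
    (p * q * n)%:R^-1 * \sum_(x : 'I_n * 'I_r) \sum_(B : family | valid_B p B)
      sigmaT R p q (T_of w B) (w x) * f (w x) (T_of w B :&: nbhd e (w x)).
  by rewrite /xi -mulr_sumr exchange_big /= (sum_labelling w_inj cardV).
rewrite normrM ger0_norm ?invr_ge0 //.
pose C : R := (p * q)%:R / (r * r.-1)%:R.
apply: (@le_trans _ _ ((p * q * n)%:R^-1 * \sum_(x : 'I_n * 'I_r)
   C * NB * (K (w x) / (deg e (w x))%:R * (cell_deg e w (w x))%:R))).
  rewrite ler_wpM2l ?invr_ge0 //; apply: le_trans (ler_norm_sum _ _ _) _.
  by apply: ler_sum => -[i a] _; apply: norm_sum_sign_le.
rewrite -mulr_sumr.
rewrite -(sum_labelling w_inj cardV (fun v => K v / (deg e v)%:R * (cell_deg e w v)%:R)).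
have sum_le :
    \sum_v K v / (deg e v)%:R * (cell_deg e w v)%:R <= Kmax K * cell_adjacency R e w.
  rewrite mulr_sumr; apply: ler_sum => v _.
  by rewrite mulrAC -mulrA ler_wpM2r ?divr_ge0 ?Kmax_ge.
have -> : Kmax K / (n * r * r.-1)%:R * cell_adjacency R e w * NB =
          (p * q * n)%:R^-1 * (C * NB * (Kmax K * cell_adjacency R e w)).
  by rewrite /C; field; rewrite -natrD !pnatr_eq0 -!lt0n; lia.
by rewrite ler_wpM2l ?invr_ge0 // ler_wpM2l // mulr_ge0 // divr_ge0.
Qed.

Hypothesis deg_gt0 : forall v, (0 < deg e v)%N.

Let dmin_pos : (0 < dmin e)%N.
Proof. by rewrite dmin_gt0 // cardV muln_gt0 n_gt0 addn_gt0 p_gt0. Qed.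

Lemma cell_adjacency_le : cell_adjacency R e w <= (#|V| * r.-1)%:R / (dmin e)%:R.
Proof.
rewrite natrM -mulrA mulr_natl -[_ *+ _]sumr_const; apply: ler_sum => v _.
apply: ler_pM; rewrite ?invr_ge0 ?ler_nat ?cell_deg_le //.
by rewrite lef_pV2 ?posrE ?ler_nat ?dmin_le_deg // ltr0n.
Qed.

Lemma condExp_sq_le :
  condExp e f w ^+ 2 <= Kmax K ^+ 2 / (n * r * r.-1 * dmin e)%:R * cell_adjacency R e w.
Proof.
set a := Kmax K / (n * r * r.-1)%:R; set Y := cell_adjacency R e w.
have a_ge0 : 0 <= a by rewrite divr_ge0 ?Kmax_ge0.
have Y_ge0 : 0 <= Y := cell_adjacency_ge0.
have -> : Kmax K ^+ 2 / (n * r * r.-1 * dmin e)%:R * Y =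
          a * Y * (a * ((#|V| * r.-1)%:R / (dmin e)%:R)).
  by rewrite /a cardV; field; rewrite -natrD !pnatr_eq0 -!lt0n dmin_pos; lia.
rewrite -(ger0_norm (sqr_ge0 (condExp e f w))) normrX expr2.
apply: le_trans (ler_pM (normr_ge0 _) (normr_ge0 _) norm_condExp_le norm_condExp_le) _.
by apply: ler_wpM2l; [exact: mulr_ge0 | apply: ler_wpM2l => //; exact: cell_adjacency_le].
Qed.

End SignedSum.

Section Labellings.
Variables (V : finType) (n r : nat) (Pi : {set {set V}}).
Local Notation labelling := {ffun 'I_n * 'I_r -> V}.
Local Notation valid := (@valid_labelling V n r Pi).
Implicit Types (w : labelling) (s : {perm V}) (v u : V).

Hypothesis Pi_partition : partition Pi [set: V].

Let Pi_cover : cover Pi = [set: V].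
Proof. by case/and3P: Pi_partition => /eqP. Qed.

Let Pi_triv : trivIset Pi.
Proof. by case/and3P: Pi_partition. Qed.

Let mem_pblock_self v : v \in pblock Pi v.
Proof. by rewrite mem_pblock Pi_cover inE. Qed.

Definition relabel s w : labelling := [ffun x => s (w x)].

Lemma relabelK s : cancel (relabel s) (relabel s^-1).
Proof. by move=> w; apply/ffunP => x; rewrite !ffunE permK. Qed.

Lemma relabelKV s : cancel (relabel s^-1) (relabel s).
Proof. by move=> w; apply/ffunP => x; rewrite !ffunE permKV. Qed.

Lemma same_cell_relabel s w v u : same_cell (relabel s w) (s v) (s u) = same_cell w v u.
Proof.
rewrite /same_cell /relabel; apply: eq_existsb => i; congr (_ && _);
  by apply: eq_existsb => j; rewrite ffunE (inj_eq perm_inj).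
Qed.

Lemma valid_relabel s w :
  (forall x, pblock Pi (s x) = pblock Pi x) -> valid (relabel s w) = valid w.
Proof.
suff valid_imp s' w' : (forall x, pblock Pi (s' x) = pblock Pi x) ->
    valid w' -> valid (relabel s' w').
  move=> sPi; apply/idP/idP; last exact: valid_imp.
  rewrite -{2}(relabelK s w); apply: valid_imp => x.
  by rewrite -sPi permKV.
move=> sPi /andP[/injectiveP w_inj /forallP rows]; apply/andP; split.
  by apply/injectiveP => x y; rewrite !ffunE => /perm_inj/w_inj.
apply/forallP => i; have /existsP[B /andP[BPi /forallP rowB]] := rows i.
apply/existsP; exists B; rewrite BPi; apply/forallP => j; rewrite ffunE.
by rewrite -(def_pblock Pi_triv BPi (rowB j)) -sPi.
Qed.

Lemma cell_sub_pblock w v : valid w -> cell w v \subset pblock Pi v.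
Proof.
case/andP=> _ /forallP rows; apply/subsetP => u.
rewrite inE => /existsP[i /andP[/existsP[j /eqP wv] /existsP[k /eqP wu]]].
have /existsP[B /andP[BPi /forallP rowB]] := rows i.
have vB : v \in B by rewrite -wv.
by rewrite (def_pblock Pi_triv BPi vB) -wu.
Qed.

Definition cell_count v u : nat := #|[set w | valid w & u \in cell w v]|.

Lemma cell_count_relabel s v u :
  (forall x, pblock Pi (s x) = pblock Pi x) -> cell_count (s v) (s u) = cell_count v u.
Proof.
move=> sPi; rewrite /cell_count -[RHS](card_preimset _ (can_inj (relabelKV s))).
apply: eq_card => w; rewrite !inE valid_relabel; last by move=> x; rewrite -sPi permKV.
by rewrite -[in RHS](same_cell_relabel s) relabelKV.
Qed.

Lemma cell_count_out v u : u \notin pblock Pi v -> cell_count v u = 0%N.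
Proof.
move=> uPv; apply: eq_card0 => w; rewrite !inE; apply/andP => -[vw uw].
by move: uPv; rewrite (subsetP (cell_sub_pblock v vw)) // inE.
Qed.

Lemma cell_count_sum v u : cell_count v u = (\sum_(w | valid w) (u \in cell w v))%N.
Proof.
rewrite /cell_count -sum1dep_card big_mkcondr /=.
by apply: eq_bigr => w _; case: (u \in cell w v).
Qed.

Hypothesis cardV : #|V| = (r * n)%N.

Lemma sum_cell_count v :
  (\sum_(u | u != v) cell_count v u = #|[pred w | valid w]| * r.-1)%N.
Proof.
under eq_bigr do rewrite cell_count_sum.
rewrite exchange_big /= -sum1_card big_distrl /=; apply: eq_bigr => w.
case/andP => /injectiveP w_inj _; rewrite mul1n -(card_cellD1 w_inj cardV v).
rewrite -sum1_card [RHS]big_mkcond [LHS]big_mkcond /=; apply: eq_bigr => u _.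
by rewrite in_setD1; case: (u == v); case: (u \in cell w v).
Qed.

Lemma pblock_tperm u u' x :
  u' \in pblock Pi u -> pblock Pi (tperm u u' x) = pblock Pi x.
Proof. by move=> u'u; case: tpermP => // ->; rewrite (same_pblock Pi_triv u'u). Qed.

(* Transpositions inside the part of v preserve validity and fix v, so all u <> v in that
   part share the cell of v equally often. *)
Lemma cell_count_val v u : u \in pblock Pi v -> u != v ->
  (cell_count v u * #|pblock Pi v|.-1 = #|[pred w | valid w]| * r.-1)%N.
Proof.
move=> uv_blk uv; rewrite -(sum_cell_count v) (bigID (mem (pblock Pi v))) /=.
rewrite [X in (_ = _ + X)%N]big1 ?addn0 => [|u' /andP[_ /cell_count_out //]].
rewrite (eq_bigr (fun=> cell_count v u)) => [|u' /andP[u'v u'_blk]].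
  rewrite sum_nat_const mulnC; congr (_ * _)%N.
  by rewrite (cardsD1 v) mem_pblock_self add1n; apply: eq_card => x; rewrite !inE.
have u'u : u' \in pblock Pi u by rewrite (same_pblock Pi_triv uv_blk).
rewrite -[RHS](cell_count_relabel (s := tperm u u')) ?tpermL ?tpermD // => x.
exact: pblock_tperm.
Qed.

Lemma sum_cell_deg (e : rel V) v :
  (\sum_(w | valid w) cell_deg e w v = \sum_(u | e v u) cell_count v u)%N.
Proof.
under [RHS]eq_bigr do rewrite cell_count_sum.
rewrite exchange_big; apply: eq_bigr => w _.
rewrite /cell_deg -sum1_card [RHS]big_mkcond [LHS]big_mkcond /=; apply: eq_bigr => u _.
by rewrite in_setI /nbhd inE; case: (e v u); case: (u \in cell w v).
Qed.

Hypothesis Pi_div : forall P, P \in Pi -> (r %| #|P|)%N.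
Hypothesis r_gt1 : (1 < r)%N.

Lemma pblock_card_gt1 P : P \in Pi -> (1 < #|P|)%N.
Proof.
move=> PPi; have : (0 < #|P|)%N.
  rewrite card_gt0; apply: contraTneq PPi => ->.
  by case/and3P: Pi_partition.
by move/(dvdn_leq)/(_ (Pi_div PPi)); lia.
Qed.

Lemma sum_inv_pblock (R : numFieldType) :
  \sum_v ((#|pblock Pi v|.-1)%:R : R)^-1 <= 2 * #|Pi|%:R.
Proof.
rewrite (eq_bigl (mem (cover Pi))) => [|v]; last by rewrite Pi_cover !inE.
rewrite (big_trivIset _ Pi_triv) /= mulr_natr -sumr_const; apply: ler_sum => P PPi.
rewrite (eq_bigr (fun=> ((#|P|.-1)%:R : R)^-1)) => [|v vP]; last first.
  by rewrite (def_pblock Pi_triv PPi vP).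
have P_gt1 := pblock_card_gt1 PPi.
rewrite sumr_const -[_ *+ #|P|]mulr_natl ler_pdivrMr ?ltr0n -?natrM ?ler_nat; lia.
Qed.

Lemma cell_count_le (R : numFieldType) v u : u != v ->
  (cell_count v u)%:R <= #|[pred w | valid w]|%:R * r.-1%:R / (#|pblock Pi v|.-1)%:R :> R.
Proof.
move=> uv; have P_gt1 : (1 < #|pblock Pi v|)%N.
  by apply/pblock_card_gt1/pblock_mem; rewrite Pi_cover inE.
case: (boolP (u \in pblock Pi v)) => u_blk.
  by rewrite -natrM -(cell_count_val u_blk uv) natrM mulfK // pnatr_eq0; lia.
by rewrite cell_count_out // mulr0n divr_ge0 ?mulr_ge0.
Qed.

Lemma sum_cell_adjacency_le (R : realFieldType) (e : rel V) :
  (forall v, ~~ e v v) -> (forall v, 0 < deg e v)%N ->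
  \sum_(w | valid w) cell_adjacency R e w
    <= #|[pred w | valid w]|%:R * r.-1%:R * (2 * #|Pi|%:R).
Proof.
move=> e_irr deg_gt0; rewrite /cell_adjacency exchange_big /=.
set NW : R := #|[pred w | valid w]|%:R.
apply: (@le_trans _ _ (\sum_v NW * r.-1%:R / (#|pblock Pi v|.-1)%:R)); last first.
  by rewrite -mulr_sumr; apply: ler_wpM2l; [rewrite mulr_ge0 | exact: sum_inv_pblock].
apply: ler_sum => v _; rewrite -mulr_suml -natr_sum sum_cell_deg natr_sum.
rewrite ler_pdivrMr ?ltr0n //.
apply: (@le_trans _ _ (\sum_(u | e v u) NW * r.-1%:R / (#|pblock Pi v|.-1)%:R)).
  apply: ler_sum => u evu; apply: cell_count_le.
  by apply: contraNneq (e_irr v) => uv; rewrite uv in evu.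
rewrite (eq_bigl (fun u => u \in nbhd e v)) => [|u]; last by rewrite /nbhd inE.
by rewrite sumr_const [X in _ <= X]mulr_natr.
Qed.

End Labellings.

Unset Implicit Arguments.

Theorem mainTheorem17 (R : realFieldType) (V : finType) (n p q : nat)
    (e : rel V) (f : V -> {set V} -> R) (K : V -> R) (Pi : {set {set V}}) :
  (0 < n)%N -> (0 < p)%N -> (0 < q)%N ->
  #|V| = ((p + q) * n)%N ->
  simple_graph e ->
  (forall v, (0 < deg e v)%N) ->
  (forall v, f v set0 = 0) ->
  (forall v, 0 < K v) ->
  lipschitz e f K ->
  partition Pi [set: V] ->
  (forall B, B \in Pi -> (p + q %| #|B|)%N) ->
  @meanSq V R p q n e f Pi <=
    2 * Kmax K ^+ 2 * (#|Pi|)%:R / (n * (p + q) * dmin e)%:R.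
Proof.
move=> n_gt0 p_gt0 q_gt0 cardV [_ e_irr] deg_gt0 _ K_gt0 f_lip Pi_part Pi_div.
have K_ge0 v : 0 <= K v by apply: ltW.
have r_gt1 : (1 < p + q)%N by lia.
have dmin_pos : (0 < dmin e)%N.
  by apply: dmin_gt0 => //; rewrite cardV muln_gt0 n_gt0 addn_gt0 p_gt0.
have rhs_ge0 : 0 <= 2 * Kmax K ^+ 2 * (#|Pi|)%:R / (n * (p + q) * dmin e)%:R.
  by rewrite divr_ge0 ?mulr_ge0 ?sqr_ge0 ?Kmax_ge0.
rewrite /meanSq; set NW : R := #|[pred w | _]|%:R.
have [->|NW_neq0] := eqVneq NW 0; first by rewrite invr0 mulr0.
rewrite ler_pdivrMr ?lt_def ?NW_neq0 ?ler0n //.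
set a := Kmax K ^+ 2 / (n * (p + q) * (p + q).-1 * dmin e)%:R.
have -> : 2 * Kmax K ^+ 2 * #|Pi|%:R / (n * (p + q) * dmin e)%:R * NW =
          a * (NW * (p + q).-1%:R * (2 * #|Pi|%:R)).
  by rewrite /a; field; rewrite -natrD !pnatr_eq0 -!lt0n dmin_pos; lia.
apply: (@le_trans _ _ (\sum_(w | valid_labelling Pi w) a * cell_adjacency R e w)).
  apply: ler_sum => w /andP[/injectiveP w_inj _].
  exact: condExp_sq_le.
rewrite -mulr_sumr; apply: ler_wpM2l; first by rewrite divr_ge0 ?sqr_ge0.
exact: sum_cell_adjacency_le.
Qed.
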